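(* Let $X\subseteq\mathbb{Z}_6^2$ and suppose there are distinct $a,b,c\in\mathbb{Z}_6$ such that $X$ contains at least $3$ elements with first coordinate $a$, at least $3$ elements with first coordinate $b$, and at least $4$ elements with first coordinate $c$. Then there exists $S\subseteq X$ with $|S|=6$ and $\sum_{s\in S}s=(0,0)$. *)

From mathcomp Require Import all_boot all_algebra.
Set Implicit Arguments. Unset Strict Implicit. Unset Printing Implicit Defensive.
Import GRing.Theory.
Local Open Scope ring_scope.

Definition Z6sq : finType := ('Z_6 * 'Z_6)%type.

Definition fiber (X : {set Z6sq}) (a : 'Z_6) : {set Z6sq} :=
  [set x in X | x.1 == a].

(* Write the elements of X with first coordinate u as the column
   {u} × (column X u).  The desired set S is a union of three "slices"
   {a} × ZA, {b} × ZB, {c} × ZC with ZA ⊆ column X a, ZB ⊆ column X b and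
   ZC ⊆ column X c.  Such a union has |ZA| + |ZB| + |ZC| elements and sum
     (a|ZA| + b|ZB| + c|ZC|,  ΣZA + ΣZB + ΣZC),
   so the theorem reduces to a purely one-dimensional statement
   ([zero_sum_columns]): for distinct a, b, c and sets YA, YB, YC ⊆ Z_6 of
   sizes at least 3, 3, 4 one can choose subsets of sizes (i, j, k) with
   i + j + k = 6, a i + b j + c k = 0 and total sum 0.

   That statement is finite and is decided by computation.  The condition on
   (a, b, c) only enters through the list [balanced a b c] of admissible size
   vectors (i, j, k), which takes just ten distinct values; for each of them and
   each choice of 3-, 3- and 4-element sets (given by their tables of subset
   sums by size) the certificate checks that some admissible size vector is
   realised. *)

From mathcomp Require Import all_boot all_algebra.
Import GRing.Theory.
Local Open Scope ring_scope.
Set Implicit Arguments. Unset Strict Implicit. Unset Printing Implicit Defensive.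

Lemma card_disjoint_setU (T : finType) (A B : {set T}) :
  [disjoint A & B] -> #|A :|: B| = (#|A| + #|B|)%N.
Proof. by move=> AB; apply/eqP; rewrite (leq_card_setU A B).2. Qed.

Lemma sum_disjoint_setU (T : finType) (V : nmodType) (A B : {set T}) (F : T -> V) :
  [disjoint A & B] -> \sum_(i in A :|: B) F i = \sum_(i in A) F i + \sum_(i in B) F i.
Proof. by move=> AB; rewrite -bigU //; apply: eq_bigl => i; rewrite inE. Qed.

Section Slices.
Variables G H : finZmodType.
Implicit Types (X : {set G * H}) (u v : G) (Z W : {set H}).

Definition column (X : {set G * H}) (u : G) : {set H} := [set y | (u, y) \in X].

Definition slice (u : G) (Z : {set H}) : {set G * H} := pair u @: Z.

Lemma sum_pair (I : finType) (A : {pred I}) (F : I -> G) (K : I -> H) :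
  \sum_(i in A) ((F i, K i) : G * H) = (\sum_(i in A) F i, \sum_(i in A) K i).
Proof. by apply: (big_rec3 (fun x y z => x = (y, z))) => // i x y z _ ->. Qed.

Lemma slice_fst u Z p : p \in slice u Z -> p.1 = u.
Proof. by case/imsetP=> y _ ->. Qed.

Lemma slice_subset X u Z : Z \subset column X u -> slice u Z \subset X.
Proof.
move=> /subsetP sZ; apply/subsetP => _ /imsetP[y /sZ yX ->].
by rewrite inE in yX.
Qed.

Lemma card_slice u Z : #|slice u Z| = #|Z|.
Proof. by apply: card_imset => y1 y2 []. Qed.

Lemma sum_slice u Z : \sum_(p in slice u Z) p = (u *+ #|Z|, \sum_(y in Z) y).
Proof.
rewrite big_imset /=; last by move=> y1 y2 _ _ [].
by rewrite sum_pair sumr_const.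
Qed.

Lemma disjoint_slice (A : {set G * H}) v W :
  {in A, forall p, p.1 != v} -> [disjoint A & slice v W].
Proof.
move=> Av; rewrite -setI_eq0; apply/eqP/setP => p; rewrite !inE.
by apply/negbTE/andP => -[/Av pv /slice_fst pW]; rewrite pW eqxx in pv.
Qed.

Lemma three_slices a b c (ZA ZB ZC : {set H}) : a != b -> a != c -> b != c ->
  let S := slice a ZA :|: slice b ZB :|: slice c ZC in
  #|S| = (#|ZA| + #|ZB| + #|ZC|)%N /\
  \sum_(p in S) p = (a *+ #|ZA| + b *+ #|ZB| + c *+ #|ZC|,
                     \sum_(y in ZA) y + \sum_(y in ZB) y + \sum_(y in ZC) y).
Proof.
move=> ab ac bc S.
have dAB : [disjoint slice a ZA & slice b ZB] by apply: disjoint_slice => p /slice_fst ->.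
have dABC : [disjoint slice a ZA :|: slice b ZB & slice c ZC].
  by apply: disjoint_slice => p; rewrite inE => /orP[] /slice_fst ->.
by rewrite !card_disjoint_setU // !sum_disjoint_setU // !sum_slice !card_slice.
Qed.

End Slices.

(* The fiber of the statement is the slice above u of its column. *)
Lemma card_fiber (X : {set Z6sq}) (u : 'Z_6) : #|fiber X u| = #|column X u|.
Proof.
rewrite -(card_slice u); apply: eq_card => -[x y]; rewrite inE /=.
apply/andP/imsetP => [[xyX /eqP xu]|[y' + [-> ->]]].
  by exists y; rewrite ?inE -?xu.
by rewrite inE => ->.
Qed.

Fixpoint subseqs (T : Type) (s : seq T) : seq (seq T) :=
  if s is x :: s' then [seq x :: t | t <- subseqs s'] ++ subseqs s' else [:: [::]].

Lemma mem_subseqs (T : eqType) (s t : seq T) : (t \in subseqs s) = subseq t s.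
Proof.
elim: s t => [|x s IHs] [|y t] //=; rewrite ?mem_cat ?IHs ?sub0seq ?orbT //.
have -> : (y :: t \in [seq x :: u | u <- subseqs s]) = (y == x) && (t \in subseqs s).
  by apply/mapP/andP => [[u ? [-> ->]]|[/eqP -> ?]]; last exists t.
rewrite IHs; case: eqVneq => [->|//] /=.
by apply/orb_idr => /cons_subseq.
Qed.

(* A computable duplicate-free enumeration of Z_6. *)
Definition z6 : seq 'Z_6 := [seq inZp i | i <- iota 0 6].

Lemma mem_z6 (x : 'Z_6) : x \in z6.
Proof.
apply/mapP; exists (val x); last by rewrite valZpK.
by rewrite mem_iota add0n ltn_ord.
Qed.

Lemma uniq_z6 : uniq z6. Proof. by vm_compute. Qed.

Definition ksets (k : nat) : seq (seq 'Z_6) := [seq t <- subseqs z6 | size t == k].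

Lemma uniq_ksets k t : t \in ksets k -> uniq t.
Proof. by rewrite mem_filter mem_subseqs => /andP[_ /subseq_uniq]; apply; exact: uniq_z6. Qed.

Lemma ksets_sub (Y : {set 'Z_6}) k : (k <= #|Y|)%N ->
  exists2 t, t \in ksets k & {subset t <= Y}.
Proof.
move=> kY; set tY := [seq y <- z6 | y \in Y].
have cardY : #|Y| = size tY.
  rewrite -(card_uniqP (filter_uniq _ uniq_z6)); apply: eq_card => y.
  by rewrite mem_filter mem_z6 andbT.
exists (take k tY); last by move=> y /mem_take; rewrite mem_filter => /andP[].
rewrite mem_filter size_takel -?cardY // eqxx mem_subseqs.
by apply: (@subseq_trans _ tY); [apply: take_subseq | apply: filter_subseq].
Qed.

(* Sum of a list, in a form that [vm_compute] evaluates. *)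
Definition lsum (s : seq 'Z_6) : 'Z_6 := foldr +%R 0 s.

(* Entry k of the table lists the sums of the k-element subsets of t (k <= 4). *)
Definition sum_table (t : seq 'Z_6) : seq (seq 'Z_6) :=
  [seq undup [seq lsum u | u <- subseqs t & size u == k] | k <- iota 0 5].

Lemma sum_tableP t k x : uniq t -> x \in nth [::] (sum_table t) k ->
  exists2 Z : {set 'Z_6}, {subset Z <= t} & #|Z| = k /\ \sum_(y in Z) y = x.
Proof.
move=> Ut; have [k5|] := ltnP k 5; last by move=> k5; rewrite nth_default ?size_map ?size_iota.
rewrite (nth_map 0%N) ?size_iota // nth_iota // add0n mem_undup.
case/mapP => u; rewrite mem_filter mem_subseqs => /andP[/eqP uk ut] ->.
have Uu : uniq u := subseq_uniq ut Ut.
exists [set y in u]; first by move=> y; rewrite inE => /(mem_subseq ut).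
split; first by rewrite cardsE (card_uniqP Uu).
by rewrite /lsum foldrE (big_uniq _ Uu); apply: eq_bigl => y; rewrite inE.
Qed.

(* Size vectors (i, j, k) of a six-element selection from three columns. *)
Definition weights : seq (nat * nat * nat) :=
  [seq (i, j, 6 - (i + j))%N | i <- iota 0 7, j <- iota 0 (7 - i)].

Lemma weights_sum w : w \in weights -> (w.1.1 + w.1.2 + w.2 = 6)%N.
Proof.
case/allpairsPdep => i [j [_]]; rewrite mem_iota add0n ltn_subRL => ij -> /=.
by rewrite subnKC.
Qed.

Definition balanced (a b c : 'Z_6) : seq (nat * nat * nat) :=
  [seq w <- weights | a *+ w.1.1 + b *+ w.1.2 + c *+ w.2 == 0].

Definition distinct3 (a b c : 'Z_6) : bool := [&& a != b, a != c & b != c].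

Definition balance_classes : seq (seq (nat * nat * nat)) :=
  undup (flatten [seq flatten [seq [seq balanced a b c | c <- z6 & distinct3 a b c]
                                  | b <- z6] | a <- z6]).

Lemma balanced_class a b c : distinct3 a b c -> balanced a b c \in balance_classes.
Proof.
move=> abc; rewrite mem_undup; apply/flatten_mapP; exists a; rewrite ?mem_z6 //.
apply/flatten_mapP; exists b; rewrite ?mem_z6 //.
by apply: map_f; rewrite mem_filter abc mem_z6.
Qed.

Definition realizes (TA TB TC : seq (seq 'Z_6)) (w : nat * nat * nat) : bool :=
  has (fun x => has (fun y => - (x + y) \in nth [::] TC w.2) (nth [::] TB w.1.2))
      (nth [::] TA w.1.1).

Definition tables (k : nat) : seq (seq (seq 'Z_6)) := [seq sum_table t | t <- ksets k].

Definition certificate : bool :=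
  let T3 := tables 3 in let T4 := tables 4 in
  all (fun W => all (fun TA => all (fun TB => all (fun TC => has (realizes TA TB TC) W)
     T4) T3) T3) balance_classes.

Lemma certificateP : certificate. Proof. by vm_compute. Qed.

Lemma zero_sum_columns (a b c : 'Z_6) (YA YB YC : {set 'Z_6}) :
  distinct3 a b c -> (3 <= #|YA|)%N -> (3 <= #|YB|)%N -> (4 <= #|YC|)%N ->
  exists ZA ZB ZC : {set 'Z_6},
    [/\ [/\ ZA \subset YA, ZB \subset YB & ZC \subset YC],
        (#|ZA| + #|ZB| + #|ZC| = 6)%N,
        a *+ #|ZA| + b *+ #|ZB| + c *+ #|ZC| = 0 &
        \sum_(y in ZA) y + \sum_(y in ZB) y + \sum_(y in ZC) y = 0].
Proof.
move=> abc /ksets_sub[tA tA3 sA] /ksets_sub[tB tB3 sB] /ksets_sub[tC tC4 sC].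
have := allP certificateP _ (balanced_class abc).
move=> /allP/(_ _ (map_f sum_table tA3))/allP/(_ _ (map_f sum_table tB3)).
move=> /allP/(_ _ (map_f sum_table tC4))/hasP[w].
rewrite mem_filter => /andP[/eqP bal /weights_sum w6].
case/hasP=> x /(sum_tableP (uniq_ksets tA3))[ZA ZAt [cA <-]].
case/hasP=> y /(sum_tableP (uniq_ksets tB3))[ZB ZBt [cB <-]].
case/(sum_tableP (uniq_ksets tC4))=> ZC ZCt [cC sumC].
have subY (Z Y : {set 'Z_6}) (t : seq 'Z_6) :
    {subset Z <= t} -> {subset t <= Y} -> Z \subset Y.
  by move=> Zt tY; apply/subsetP => z /Zt /tY.
exists ZA, ZB, ZC; split; rewrite ?cA ?cB ?cC //.
- by split; apply: subY; eassumption.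
- by rewrite sumC subrr.
Qed.

Theorem mainTheorem13 (X : {set Z6sq}) (a b c : 'Z_6) :
  a != b -> a != c -> b != c ->
  (3 <= #|fiber X a|)%N -> (3 <= #|fiber X b|)%N -> (4 <= #|fiber X c|)%N ->
  exists S : {set Z6sq}, [/\ S \subset X, #|S| = 6%N &
    \sum_(s in S) (s : 'Z_6 * 'Z_6) = 0].
Proof.
move=> ab ac bc; rewrite !card_fiber => ha hb hc.
have abc : distinct3 a b c by apply/and3P.
have [ZA [ZB [ZC [[sA sB sC] card6 sum1 sum2]]]] := zero_sum_columns abc ha hb hc.
have [cardS sumS] := three_slices ZA ZB ZC ab ac bc.
exists (slice a ZA :|: slice b ZB :|: slice c ZC); split.
- by rewrite !subUset !slice_subset.
- by rewrite cardS.
- by rewrite sumS sum1 sum2.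
Qed.
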